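(* Let $q\ge 2$, $n\ge 1$ and $\varepsilon\in\mathbb{N}$ with $\varepsilon\le n$. Let $x\in\mathbb{Z}_q^n$ be a hidden vector, and suppose the attacker has access to an oracle $\texttt{Match}_{x,\varepsilon}$ which, on a query $y\in\mathbb{Z}_q^n$, returns $1$ if $d(x,y)\le\varepsilon$ and $0$ otherwise, and which additionally reveals the set of error positions $\{i: x_i\neq y_i\}$ (but not the values $x_i$) whenever $d(x,y)\le\varepsilon$. Then there is an adaptive query strategy that recovers $x$ using, in the worst case, $\mathcal{O}(q^{n-\varepsilon}+q)$ queries to $\texttt{Match}_{x,\varepsilon}$.
   Context: $\mathbb{Z}_q^n=\{0,\dots,q-1\}^n$ is equipped with the Hamming distance $d(x,y)=|\{i\in\{1,\dots,n\}: x_i\neq y_i\}|$. The attacker may choose each query adaptively based on previous oracle answers; complexity is measured as the number of oracle queries. *)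

From mathcomp Require Import all_boot.
Set Implicit Arguments. Unset Strict Implicit. Unset Printing Implicit Defensive.

Definition word (q n : nat) := {ffun 'I_n -> 'I_q}.

Definition diffset q n (x y : word q n) : {set 'I_n} := [set i | x i != y i].

Definition hamming q n (x y : word q n) : nat := #|diffset x y|.

(* The oracle Match_{x,eps} with error-position leakage:
   None  <-> answer 0 (d(x,y) > eps);
   Some S <-> answer 1 (d(x,y) <= eps), together with S = {i | x_i <> y_i}. *)
Definition match_oracle q n (eps : nat) (x y : word q n) : option {set 'I_n} :=
  if hamming x y <= eps then Some (diffset x y) else None.

(* Adaptive query strategies (decision trees): either output a guess,
   or query y and continue depending on the oracle answer. *)
Inductive strategy (q n : nat) : Type :=
| Guess of word q n
| Ask of word q n & (option {set 'I_n} -> strategy q n).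

Fixpoint run q n (eps : nat) (x : word q n) (s : strategy q n) : word q n * nat :=
  match s with
  | Guess w => (w, 0)
  | Ask y k => let r := run eps x (k (match_oracle eps x y)) in (r.1, r.2.+1)
  end.

From mathcomp Require Import all_boot.
Set Implicit Arguments. Unset Strict Implicit. Unset Printing Implicit Defensive.

(* The q^(n-eps) words that are constant on the first eps coordinates form a
   covering code of radius eps: every x is within distance eps of the one that
   agrees with x on the last n - eps coordinates.  Querying them in turn costs
   at most q^(n-eps) queries until one, y, matches and reveals S = {i | x_i <> y_i}.
   Then for each value v the query "y with S overwritten by v" still lies within
   distance eps of x, so it matches and reveals exactly the i in S with x_i <> v;
   after these q queries every x_i is known. *)

Section Strategies.
Variables q n : nat.

Fixpoint ask_all (ys : seq (word q n))
    (k : seq (option {set 'I_n}) -> strategy q n) : strategy q n :=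
  if ys is y :: ys' then Ask y (fun r => ask_all ys' (fun rs => k (r :: rs)))
  else k [::].

Fixpoint search (fallback : strategy q n)
    (k : word q n -> {set 'I_n} -> strategy q n) (ys : seq (word q n)) :
    strategy q n :=
  if ys is y :: ys' then
    Ask y (fun r => if r is Some T then k y T else search fallback k ys')
  else fallback.

Definition fill (S : {set 'I_n}) (y : word q n) (v : 'I_q) : word q n :=
  [ffun i => if i \in S then v else y i].

Definition matched_at (i : 'I_n) (r : option {set 'I_n}) : bool :=
  if r is Some T then i \notin T else false.

(* The v-th answer in rs is the one to the query [fill S y v]. *)
Definition recover (S : {set 'I_n}) (y : word q n)
    (rs : seq (option {set 'I_n})) : word q n :=
  [ffun i => if i \in S then odflt (y i) [pick v : 'I_q | matched_at i (nth None rs v)]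
             else y i].

Definition learn (S : {set 'I_n}) (y : word q n) : strategy q n :=
  ask_all [seq fill S y u | u <- enum 'I_q] (fun rs => Guess (recover S y rs)).

Variables (eps : nat) (x : word q n).

Lemma run_ask_all ys k :
  run eps x (ask_all ys k) =
  let r := run eps x (k (map (match_oracle eps x) ys)) in (r.1, size ys + r.2).
Proof.
elim: ys k => [|y ys IH] k /=; first by case: run.
by rewrite IH.
Qed.

Lemma run_search fallback k ys b :
    (forall y, hamming x y <= eps -> run eps x (k y (diffset x y)) = (x, b)) ->
    has (fun y => hamming x y <= eps) ys ->
  (run eps x (search fallback k ys)).1 = x /\
  (run eps x (search fallback k ys)).2 <= size ys + b.
Proof.
move=> run_k; elim: ys => [|y ys IH] //= /orP y_ys.
rewrite /match_oracle; case: ifP => [close | far].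
  by rewrite run_k //= addSn ltnS leq_addl.
case: y_ys => [close | /IH [-> cost]]; first by rewrite close in far.
by rewrite addSn ltnS.
Qed.

Section Learn.
Variable y : word q n.
Hypothesis close : hamming x y <= eps.
Let S := diffset x y.

Lemma diffset_fill v : diffset x (fill S y v) = [set i in S | x i != v].
Proof.
apply/setP => i; rewrite !inE ffunE /S inE.
by case: (x i =P y i) => [-> | _] /=; rewrite ?eqxx.
Qed.

Lemma match_fill v : match_oracle eps x (fill S y v) = Some [set i in S | x i != v].
Proof.
rewrite /match_oracle -diffset_fill ifT //.
apply: leq_trans close; apply: subset_leq_card.
by rewrite diffset_fill; apply/subsetP => i; rewrite inE => /andP [].
Qed.

Lemma run_learn : run eps x (learn S y) = (x, q).
Proof.
rewrite run_ask_all /= size_map size_enum_ord addn0; congr pair.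
apply/ffunP => i; rewrite ffunE.
case: ifPn => [iS | iNS]; last by move: iNS; rewrite inE negbK => /eqP.
have answer (v : 'I_q) : matched_at i (nth None (map (match_oracle eps x)
                  [seq fill S y u | u <- enum 'I_q]) v) = (x i == v).
  rewrite -map_comp (nth_map v) ?size_enum_ord // nth_ord_enum /= match_fill.
  by rewrite /= inE iS negbK.
case: pickP => [v | none] /=; first by rewrite answer => /eqP.
by have := none (x i); rewrite answer eqxx.
Qed.

End Learn.
End Strategies.

Lemma card_ord_lt n m : #|[set i : 'I_n | i < m]| <= m.
Proof.
rewrite cardE -(size_map val) -[X in _ <= X](size_iota 0 m).
apply: uniq_leq_size; first by rewrite (map_inj_uniq val_inj) enum_uniq.
by move=> k /mapP [i]; rewrite mem_enum inE => i_m ->; rewrite mem_iota.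
Qed.

Section CoveringCode.
Variables (q n eps : nat) (d : 'I_q).

Lemma shift_ord_subproof (j : 'I_(n - eps)) : eps + j < n.
Proof. by rewrite -ltn_subRL. Qed.

Definition shift_ord (j : 'I_(n - eps)) : 'I_n := Ordinal (shift_ord_subproof j).

Definition pad (f : {ffun 'I_(n - eps) -> 'I_q}) : word q n :=
  [ffun i : 'I_n => if eps <= i then
     (if insub (i - eps) is Some j then f j else d) else d].

Definition covering_code : seq (word q n) :=
  [seq pad f | f <- enum {ffun 'I_(n - eps) -> 'I_q}].

Lemma size_covering_code : size covering_code = q ^ (n - eps).
Proof. by rewrite size_map -cardE card_ffun !card_ord. Qed.

Lemma covering_codeP (x : word q n) :
  has (fun y => hamming x y <= eps) covering_code.
Proof.
apply/hasP; exists (pad [ffun j => x (shift_ord j)]).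
  by apply: map_f; rewrite mem_enum.
apply: leq_trans (card_ord_lt n eps); apply: subset_leq_card.
apply/subsetP => i; rewrite !inE ffunE; case: leqP => // eps_i.
have i_n : i - eps < n - eps by rewrite ltn_sub2r // (leq_ltn_trans eps_i).
rewrite insubT ffunE.
have -> : shift_ord (Sub (i - eps) i_n) = i by apply: val_inj; rewrite /= subnKC.
by rewrite eqxx.
Qed.

End CoveringCode.

Theorem theorem2 :
  exists C : nat, forall (q n eps : nat), 2 <= q -> 1 <= n -> eps <= n ->
    exists s : strategy q n, forall x : word q n,
      (run eps x s).1 = x /\ (run eps x s).2 <= C * (q ^ (n - eps) + q).
Proof.
exists 1 => q n eps q_ge2 _ _.
have d : 'I_q by exists 0; apply: leq_trans q_ge2.
exists (search (Guess [ffun=> d]) (fun y S => learn S y) (covering_code n eps d)) => x.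
rewrite mul1n -(size_covering_code n eps d).
apply: run_search; last exact: covering_codeP.
exact: run_learn.
Qed.
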